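(* Let $(D,\prec,\succ,* )$ be an involutive dendriform algebra, let $(F,\diamond,R)$ be the free nonunitary (weight zero) Rota-Baxter algebra $\varpi^{\mathrm{NC},0}(T(D))$ on the vector space $D$, equipped with the involution described below, and let $J_R$ be the Rota-Baxter ideal of $F$ generated by $\{x\prec y-x\diamond R(y),\ x\succ y-R(x)\diamond y\mid x,y\in D\}$. Then $J_R$ is closed under the involution, so the universal enveloping Rota-Baxter algebra $F/J_R$ of $D$ is an involutive Rota-Baxter algebra (with the induced involution).
   Context: A dendriform algebra is a vector space $D$ with bilinear $\prec,\succ$ satisfying $(a\prec b)\prec c=a\prec(b\prec c+b\succ c)$, $(a\succ b)\prec c=a\succ(b\prec c)$, $(a\prec b+a\succ b)\succ c=a\succ(b\succ c)$; it is involutive if equipped with a linear $*$, $a^{**}=a$, $(a\prec b)^*=b^*\succ a^*$. A Rota-Baxter operator on an associative algebra $B$ is a linear $R$ with $R(a)R(b)=R(aR(b)+R(a)b)$; an involutive Rota-Baxter algebra is a Rota-Baxter algebra with an involution $*$ ($a^{**}=a$, $(ab)^*=b^*a^*$) such that $R(a^* )=R(a)^*$. A Rota-Baxter ideal is a two-sided ideal stable under $R$. Construction of $F$ (Ebrahimi-Fard–Guo): $T(D)=\bigoplus_{n\ge1}D^{\otimes n}$ is the nonunitary tensor algebra with involution $(v_1\otimes\cdots\otimes v_n)^*=v_n^*\otimes\cdots\otimes v_1^*$. With $X$ a basis of $B=T(D)$, Rota-Baxter words are built from letters of $X$ and bracketed words $\lfloor\cdot\rfloor$, alternating in their standard decomposition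 $\mathbf x=\mathbf x_1\cdots\mathbf x_b$ between elements of $X$ and bracketed Rota-Baxter words; $F$ is spanned by these words, $R(\mathbf x)=\lfloor\mathbf x\rfloor$, and the product $\diamond$ is concatenation when the last factor of $\mathbf x$ and the first of $\mathbf x'$ are of different types, the product of $B$ on adjacent letters of $X$, and $\lfloor\bar x\rfloor\diamond\lfloor\bar x'\rfloor=\lfloor\lfloor\bar x\rfloor\diamond\bar x'\rfloor+\lfloor\bar x\diamond\lfloor\bar x'\rfloor\rfloor$ on adjacent bracketed factors. $D$ is viewed inside $F$ via $D\subset T(D)\to F$. The involution on $F$ is given on words by the involution of $B$ on letters of $X$, $\lfloor\mathbf x\rfloor^*=\lfloor\mathbf x^*\rfloor$ and $(\mathbf x_1\cdots\mathbf x_b)^*=\mathbf x_b^*\cdots\mathbf x_1^*$; with it $(F,\diamond,R,* )$ is an involutive Rota-Baxter algebra. *)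

From mathcomp Require Import all_boot all_order all_algebra.
Set Implicit Arguments. Unset Strict Implicit. Unset Printing Implicit Defensive.
Import GRing.Theory.
Local Open Scope ring_scope.

Section Defs.
Variable K : fieldType.

Definition is_linear (U V : lmodType K) (f : U -> V) : Prop :=
  forall (a : K) (u v : U), f (a *: u + v) = a *: f u + f v.

Definition is_bilinear (U : lmodType K) (op : U -> U -> U) : Prop :=
  (forall y, is_linear (fun x => op x y)) /\ (forall x, is_linear (op x)).

Definition is_dendriform (D : lmodType K) (prec succ : D -> D -> D) : Prop :=
  [/\ is_bilinear prec, is_bilinear succ,
      (forall a b c, prec (prec a b) c = prec a (prec b c + succ b c)),
      (forall a b c, prec (succ a b) c = succ a (prec b c)) &
      (forall a b c, succ (prec a b + succ a b) c = succ a (succ b c))].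

Definition is_inv_dendriform (D : lmodType K) (prec succ : D -> D -> D)
    (star : D -> D) : Prop :=
  [/\ is_dendriform prec succ, is_linear star,
      (forall a, star (star a) = a) &
      (forall a b, star (prec a b) = succ (star b) (star a))].

Definition is_nu_algebra (A : lmodType K) (mul : A -> A -> A) : Prop :=
  is_bilinear mul /\ (forall a b c, mul (mul a b) c = mul a (mul b c)).

Definition is_rota_baxter (A : lmodType K) (mul : A -> A -> A) (R : A -> A) : Prop :=
  is_linear R /\ (forall a b, mul (R a) (R b) = R (mul a (R b) + mul (R a) b)).

Definition is_rb_algebra (A : lmodType K) (mul : A -> A -> A) (R : A -> A) : Prop :=
  is_nu_algebra mul /\ is_rota_baxter mul R.

Definition is_inv_rb_algebra (A : lmodType K) (mul : A -> A -> A) (R : A -> A)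
    (star : A -> A) : Prop :=
  [/\ is_rb_algebra mul R, is_linear star,
      (forall a, star (star a) = a),
      (forall a b, star (mul a b) = mul (star b) (star a)) &
      (forall a, R (star a) = star (R a))].

Definition is_rb_hom (A B : lmodType K) (mulA : A -> A -> A) (RA : A -> A)
    (mulB : B -> B -> B) (RB : B -> B) (g : A -> B) : Prop :=
  [/\ is_linear g, (forall a b, g (mulA a b) = mulB (g a) (g b)) &
      (forall a, g (RA a) = RB (g a))].

Definition is_free_rb_algebra (D F : lmodType K) (i : D -> F)
    (mul : F -> F -> F) (R : F -> F) : Prop :=
  [/\ is_rb_algebra mul R, is_linear i &
      forall (B : lmodType K) (mulB : B -> B -> B) (RB : B -> B) (f : D -> B),
        is_rb_algebra mulB RB -> is_linear f ->
        (exists g : F -> B, is_rb_hom mul R mulB RB g /\ forall d, g (i d) = f d) /\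
        (forall g1 g2 : F -> B,
           is_rb_hom mul R mulB RB g1 -> is_rb_hom mul R mulB RB g2 ->
           (forall d, g1 (i d) = f d) -> (forall d, g2 (i d) = f d) ->
           forall x, g1 x = g2 x)].

Definition is_rb_ideal (A : lmodType K) (mul : A -> A -> A) (R : A -> A)
    (I : A -> Prop) : Prop :=
  [/\ I 0, (forall x y, I x -> I y -> I (x + y)),
      (forall (c : K) x, I x -> I (c *: x)),
      (forall a x, I x -> I (mul a x) /\ I (mul x a)) &
      (forall x, I x -> I (R x))].

Definition rb_ideal_gen (A : lmodType K) (mul : A -> A -> A) (R : A -> A)
    (S : A -> Prop) : A -> Prop :=
  fun x => forall I : A -> Prop, is_rb_ideal mul R I -> (forall s, S s -> I s) -> I x.

Definition JR_gens (D F : lmodType K) (prec succ : D -> D -> D) (i : D -> F)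
    (mul : F -> F -> F) (R : F -> F) : F -> Prop :=
  fun z => exists x y : D,
    z = i (prec x y) - mul (i x) (R (i y)) \/
    z = i (succ x y) - mul (R (i x)) (i y).

End Defs.

From mathcomp Require Import all_boot all_order all_algebra.
Set Implicit Arguments. Unset Strict Implicit.
Import GRing.Theory.
Local Open Scope ring_scope.

(* The involution [s] is a linear anti-endomorphism commuting with [R], so the
   preimage of a Rota-Baxter ideal under it is again a Rota-Baxter ideal.
   It maps the generator [x < y - x R(y)] to [s(y) > s(x) - R(s(y)) s(x)] and
   vice versa, so the preimage of [J_R] contains the generators of [J_R],
   hence contains [J_R] by minimality. *)

Section Linear.
Variables (K : fieldType) (U V : lmodType K) (f : U -> V).
Hypothesis f_linear : is_linear f.

Lemma is_linear0 : f 0 = 0.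
Proof.
apply: (@addrI _ (f 0)); rewrite addr0.
by have := f_linear 1 0 0; rewrite !scale1r addr0.
Qed.

Lemma is_linearD a b : f (a + b) = f a + f b.
Proof. by have := f_linear 1 a b; rewrite !scale1r. Qed.

Lemma is_linearZ (c : K) a : f (c *: a) = c *: f a.
Proof. by have := f_linear c a 0; rewrite !addr0 is_linear0 addr0. Qed.

Lemma is_linearB a b : f (a - b) = f a - f b.
Proof. by rewrite is_linearD -scaleN1r is_linearZ scaleN1r. Qed.

End Linear.

Section RotaBaxterIdeals.
Variables (K : fieldType) (A : lmodType K) (mul : A -> A -> A) (R : A -> A).

Lemma rb_ideal_gen_is_rb_ideal (S : A -> Prop) :
  is_rb_ideal mul R (rb_ideal_gen mul R S).
Proof.
split=> [I [] //| x y Jx Jy I HI HS | c x Jx I HI HS | a x Jx | x Jx I HI HS].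
- by have [_ HD _ _ _] := HI; apply: HD; [apply: Jx | apply: Jy].
- by have [_ _ HZ _ _] := HI; apply: HZ; apply: Jx.
- by split=> I HI HS; have [_ _ _ HM _] := HI; case: (HM a x (Jx I HI HS)).
- by have [_ _ _ _ HR] := HI; apply: HR; apply: Jx.
Qed.

Lemma rb_ideal_gen_gen (S : A -> Prop) s : S s -> rb_ideal_gen mul R S s.
Proof. by move=> Ss I _; apply. Qed.

Section AntiEndomorphism.
Variable g : A -> A.
Hypotheses (g_linear : is_linear g)
  (g_anti : forall a b, g (mul a b) = mul (g b) (g a))
  (R_g : forall a, R (g a) = g (R a)).

Lemma rb_ideal_preim_anti (I : A -> Prop) :
  is_rb_ideal mul R I -> is_rb_ideal mul R (fun x => I (g x)).
Proof.
case=> I0 ID IZ IM IR; split=> [| x y Ix Iy | c x Ix | a x Ix | x Ix].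
- by rewrite is_linear0.
- by rewrite is_linearD //; apply: ID.
- by rewrite is_linearZ //; apply: IZ.
- by rewrite !g_anti; case: (IM (g a) _ Ix).
- by rewrite -R_g; apply: IR.
Qed.

Lemma rb_ideal_gen_anti_stable (S : A -> Prop) :
  (forall s, S s -> rb_ideal_gen mul R S (g s)) ->
  forall x, rb_ideal_gen mul R S x -> rb_ideal_gen mul R S (g x).
Proof.
move=> gS x Jx; apply: Jx gS.
exact/rb_ideal_preim_anti/rb_ideal_gen_is_rb_ideal.
Qed.

End AntiEndomorphism.
End RotaBaxterIdeals.

Lemma JR_gens_star (K : fieldType) (D F : lmodType K)
    (prec succ : D -> D -> D) (starD : D -> D)
    (i : D -> F) (mul : F -> F -> F) (R : F -> F) (starF : F -> F) :
  is_inv_dendriform prec succ starD -> is_linear starF ->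
  (forall a b, starF (mul a b) = mul (starF b) (starF a)) ->
  (forall a, R (starF a) = starF (R a)) ->
  (forall d, starF (i d) = i (starD d)) ->
  forall s, JR_gens prec succ i mul R s ->
            JR_gens prec succ i mul R (starF s).
Proof.
case=> _ _ starDK star_prec starF_linear starF_anti R_starF starF_i.
move=> s [x [y [-> | ->]]]; rewrite is_linearB // starF_anti -R_starF !starF_i;
  exists (starD y), (starD x).
- by right; rewrite star_prec.
- by left; rewrite -{1}(starDK x) -{1}(starDK y) -star_prec starDK.
Qed.

Theorem mainTheorem9 (K : fieldType) (D : lmodType K)
    (prec succ : D -> D -> D) (starD : D -> D)
    (F : lmodType K) (i : D -> F) (mul : F -> F -> F) (R : F -> F)
    (starF : F -> F) :
  is_inv_dendriform prec succ starD ->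
  is_free_rb_algebra i mul R ->
  is_inv_rb_algebra mul R starF ->
  (forall d, starF (i d) = i (starD d)) ->
  forall x, rb_ideal_gen mul R (JR_gens prec succ i mul R) x ->
            rb_ideal_gen mul R (JR_gens prec succ i mul R) (starF x).
Proof.
move=> invD _ [_ starF_linear _ starF_anti R_starF] starF_i.
apply: rb_ideal_gen_anti_stable => // s Ss.
by apply: rb_ideal_gen_gen; apply: (JR_gens_star invD).
Qed.
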